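(* Let $k\in\mathbb N$, $1\le q<\infty$, $\alpha,\beta\in\mathbb R$, and $f\in\mathbb M_+^k\cap\mathbb W_q^{\alpha,\beta}$. Then, for every $\delta>0$, \[ \overleftarrow\Omega_\varphi^k(f,\delta)_{w_{\alpha,\beta},q}\le c\|w_{\alpha,\beta}f\|_{L_q[1-2k^2\delta^2,1]}, \] with $c$ independent of $f$ and $\delta$.
   Context: $w_{\alpha,\beta}(x)=(1+x)^\alpha(1-x)^\beta$; $\|g\|_{L_q(S)}$ is the $L_q$ norm over $S$, $\|\cdot\|_q$ the $L_q[-1,1]$ norm; $\mathbb W_q^{\alpha,\beta}=\{f:\|w_{\alpha,\beta}f\|_q<\infty\}$. $\Delta_h^k(f,x)=\sum_{i=0}^k\binom ki(-1)^{k-i}f(x-kh/2+ih)$ if $x\pm kh/2\in[-1,1]$, else $0$, and $\overleftarrow\Delta_h^k(f,x)=\Delta_h^k(f,x-kh/2)$. For a weight $w$, $\overleftarrow\Omega_\varphi^k(f,\delta)_{w,q}=\sup_{0<h\le2k^2\delta^2}\|w\overleftarrow\Delta_h^k(f,\cdot)\|_{L_q[1-2k^2\delta^2,1]}$. $\mathbb M^k$: functions on $(-1,1)$ with all $k$th divided differences at distinct points nonnegative; $\mathbb M_+^k=\{f\in\mathbb M^k:f=0\text{ on }(-1,0]\}$. *)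

From HB Require Import structures.
From mathcomp Require Import all_boot all_order all_algebra.
From mathcomp Require Import all_classical all_reals all_analysis.
Set Implicit Arguments. Unset Strict Implicit. Unset Printing Implicit Defensive.
Import Order.TTheory GRing.Theory Num.Theory.
Local Open Scope classical_set_scope.
Local Open Scope ring_scope.

Section Defs.
Variable R : realType.

Definition wab (alpha beta : R) (x : R) : R :=
  powR (1 + x) alpha * powR (1 - x) beta.

(* L_q norm over S (restricted to [-1,1], where all functions live):
   (\int_{S \cap [-1,1]} |g|^q)^{1/q}, as an extended real. *)
Definition LqS (q : R) (S : set R) (g : R -> R) : \bar R :=
  let D := S `&` `[(-1 : R), 1%R] in
  poweR (\int[lebesgue_measure]_(x in D) ((`|g x| `^ q)%R)%:E)%E q^-1.

Definition Lq (q : R) (g : R -> R) : \bar R := LqS q `[(-1 : R), 1%R] g.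

Definition Wq (q alpha beta : R) (f : R -> R) : Prop :=
  measurable_fun `[(-1 : R), 1%R] f /\ (Lq q (fun x => (wab alpha beta x * f x)%R) < +oo)%E.

Definition Delta (k : nat) (h : R) (f : R -> R) (x : R) : R :=
  if (-1 <= x - k%:R * h / 2) && (x + k%:R * h / 2 <= 1) then
    \sum_(i < k.+1) ('C(k, i))%:R * (-1) ^+ (k - i) *
       f (x - k%:R * h / 2 + i%:R * h)
  else 0.

Definition bDelta (k : nat) (h : R) (f : R -> R) (x : R) : R :=
  Delta k h f (x - k%:R * h / 2).

Definition bOmega (k : nat) (w : R -> R) (q : R) (f : R -> R) (delta : R)
  : \bar R :=
  ereal_sup [set LqS q `[1 - 2 * k%:R ^+ 2 * delta ^+ 2, 1]
                     (fun x => w x * bDelta k h f x)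
            | h in [set h : R | 0 < h <= 2 * k%:R ^+ 2 * delta ^+ 2]].

Definition divdiff (k : nat) (f : R -> R) (x : 'I_k.+1 -> R) : R :=
  \sum_(i < k.+1) f (x i) / \prod_(j < k.+1 | j != i) (x i - x j).

Definition Mk (k : nat) (f : R -> R) : Prop :=
  forall x : 'I_k.+1 -> R, injective x ->
    (forall i, -1 < x i < 1) -> 0 <= divdiff f x.

Definition Mkplus (k : nat) (f : R -> R) : Prop :=
  Mk k f /\ (forall x : R, -1 < x <= 0 -> f x = 0).

End Defs.

From HB Require Import structures.
From mathcomp Require Import all_boot all_order all_algebra.
From mathcomp Require Import all_classical all_reals all_analysis.
From mathcomp Require Import lra zify measurable_realfun.
Import Order.TTheory GRing.Theory Num.Theory.
Local Open Scope classical_set_scope.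
Local Open Scope ring_scope.

(* For k >= 1, a function f in M_+^k is nonnegative and nondecreasing on
   (-1, 1).  Indeed, f vanishes at k - 1 fixed points z_j of (-1, 0), and the
   k-th divided difference of f at these points and at 0 <= a < b is the
   difference quotient of g(t) = f(t) / prod_j (t - z_j); hence g is
   nondecreasing on [0, 1), and so is f = g * prod_j (t - z_j) since the
   product is positive and nondecreasing there.  Consequently every point
   entering the backward difference at x lies in (-1, x], so that
   |Delta_h^k(f, x)| <= 2^k f(x) for all x except x = 1 and x = kh - 1, and
   integrating gives the claim with c = 2^k. *)

Section integral_nonmeasurable.
Local Open Scope ereal_scope.
Context {d} {T : measurableType d} {R : realType}.
Variable mu : {measure set T -> \bar R}.

(* No measurability of [f1] is needed: the integral of a nonnegative function
   is the supremum of the integrals of the simple functions below it. *)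
Lemma ge0_le_integral_nonmeas (D : set T) (f1 f2 : T -> \bar R) :
  (forall x, D x -> 0 <= f1 x) -> (forall x, D x -> f1 x <= f2 x) ->
  \int[mu]_(x in D) f1 x <= \int[mu]_(x in D) f2 x.
Proof.
move=> f10 f12.
have f20 x : D x -> 0 <= f2 x.
  by move=> Dx; exact: le_trans (f10 x Dx) (f12 x Dx).
rewrite !(integral_mkcond D) !ge0_integralTE => [|x|x].
- apply: le_ereal_sup => _ [g /= g_le <-]; exists g => //= x.
  apply: le_trans (g_le x) _; rewrite !patchE; case: ifP => // /set_mem /f12 //.
- by rewrite patchE; case: ifP => // /set_mem /f20.
- by rewrite patchE; case: ifP => // /set_mem /f10.
Qed.

Lemma ae_ge0_le_integral_nonmeas (D N : set T) (f1 f2 : T -> \bar R) :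
  measurable D -> measurable N -> mu N = 0 -> measurable_fun D f2 ->
  (forall x, D x -> 0 <= f1 x) -> (forall x, D x -> 0 <= f2 x) ->
  (forall x, D x -> ~ N x -> f1 x <= f2 x) ->
  \int[mu]_(x in D) f1 x <= \int[mu]_(x in D) f2 x.
Proof.
move=> mD mN N0 mf2 f10 f20 f12.
(* [g] dominates [f1] everywhere and equals [f2] almost everywhere. *)
pose g x := if x \in N then +oo else f2 x.
have g0 x : D x -> 0 <= g x by rewrite /g; case: ifP => // _; exact: f20.
have mg : measurable_fun D g.
  apply: measurable_fun_if => //; last exact: measurable_funS mf2.
  apply: (measurable_fun_bool true).
  have -> : (fun x => x \in N) @^-1` [set true] = N.
    by apply/seteqP; split => x /=; [move/set_mem | move/mem_set].
  exact: measurableI.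
have -> : \int[mu]_(x in D) f2 x = \int[mu]_(x in D) g x.
  apply: ge0_ae_eq_integral => //; exists N; split => // x /= gf2.
  by apply: contrapT => Nx; apply: gf2 => _; rewrite /g memNset.
apply: ge0_le_integral_nonmeas => // x Dx; rewrite /g.
by case: ifPn => [_|/negP Nx]; [exact: leey | apply: f12 => // /mem_set].
Qed.

End integral_nonmeasurable.

Section weighted_norm.
Context {R : realType}.

Lemma LqS_le_ae (q c : R) (S N : set R) (g F : R -> R) :
  0 < q -> 0 <= c -> measurable S -> measurable N -> lebesgue_measure N = 0%E ->
  measurable_fun (S `&` `[-1, 1]) F ->
  (forall x, (S `&` `[-1, 1]) x -> ~ N x -> `|g x| <= c * `|F x|) ->
  (LqS q S g <= c%:E * LqS q S F)%E.
Proof.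
move=> q0 c0 mS mN N0 mF gF; rewrite /LqS.
set D := S `&` _.
have mD : measurable D by apply: measurableI => //; exact: measurable_itv.
have mFq : measurable_fun D (fun x => `|F x| `^ q).
  apply: (measurableT_comp (measurable_powR q)).
  exact: measurableT_comp.
have int_le : (\int[lebesgue_measure]_(x in D) (`|g x| `^ q)%:E <=
    (c `^ q)%:E * \int[lebesgue_measure]_(x in D) (`|F x| `^ q)%:E)%E.
  rewrite -ge0_integralZl_EFin ?powR_ge0 //; last exact/measurable_EFinP.
  apply: (@ae_ge0_le_integral_nonmeas _ _ _ lebesgue_measure D N _ _ mD mN N0)
    => [|x _|x _|x Dx Nx].
  - by apply/measurable_EFinP; apply: measurable_funM => //; exact: measurable_cst.
  - by rewrite lee_fin powR_ge0.
  - by rewrite lee_fin mulr_ge0 ?powR_ge0.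
  - rewrite lee_fin -powRM ?normr_ge0 //.
    by apply: ge0_ler_powR (gF x Dx Nx); rewrite ?nnegrE ?mulr_ge0 ?normr_ge0 // ltW.
apply: (le_trans (gt0_ler_poweR _ _ _ int_le)).
- by rewrite invr_ge0; exact: ltW.
- by rewrite in_itv /= leey andbT integral_ge0.
- by rewrite in_itv /= leey andbT mule_ge0 ?lee_fin ?powR_ge0 ?integral_ge0.
rewrite poweRM ?lee_fin ?powR_ge0 ?integral_ge0 // poweR_EFin -powRrM.
by rewrite mulfV ?gt_eqF // powRr1.
Qed.

End weighted_norm.

Section nodes.
Context {R : realType}.
Implicit Types (f : R -> R) (z : nat -> R) (a b t : R).

Definition nodes n z a b (i : 'I_n.+2) : R :=
  if (i < n)%N then z i else if i == n :> nat then a else b.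

Definition node_prod n z t : R := \prod_(j < n) (t - z j).

Arguments nodes {n}.

Lemma nodes_low n z a b (j : 'I_n) :
  nodes z a b (widen_ord (leqnSn _) (widen_ord (leqnSn _) j)) = z j.
Proof. by rewrite /nodes /= ltn_ord. Qed.

Lemma nodes_penult n z a b : nodes z a b (widen_ord (leqnSn _) (@ord_max n)) = a.
Proof. by rewrite /nodes /= ltnn eqxx. Qed.

Lemma nodes_last n z a b : nodes z a b (@ord_max n.+1) = b.
Proof. by rewrite /nodes /= ltnNge leqnSn /= gtn_eqF. Qed.

Lemma prod_nodes_last n z a b :
  \prod_(j < n.+2 | j != ord_max) (b - nodes z a b j) = node_prod n z b * (b - a).
Proof.
rewrite big_mkcond !big_ord_recr /= eqxx mulr1 nodes_penult.
congr (_ * _); last by rewrite ifT //; apply/eqP => /(congr1 val) /=; lia.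
apply: eq_bigr => j _; rewrite nodes_low ifT //.
by apply/eqP => /(congr1 val) /=; have := ltn_ord j; lia.
Qed.

Lemma prod_nodes_penult n z a b :
  \prod_(j < n.+2 | j != widen_ord (leqnSn _) ord_max) (a - nodes z a b j) =
  node_prod n z a * (a - b).
Proof.
rewrite big_mkcond !big_ord_recr /= eqxx mulr1 nodes_last.
congr (_ * _); last by rewrite ifT //; apply/eqP => /(congr1 val) /=; lia.
apply: eq_bigr => j _; rewrite nodes_low ifT //.
by apply/eqP => /(congr1 val) /=; have := ltn_ord j; lia.
Qed.

Lemma divdiff_nodes n f z a b : (forall j, (j < n)%N -> f (z j) = 0) ->
  divdiff f (@nodes n z a b) =
  (f b / node_prod n z b - f a / node_prod n z a) / (b - a).
Proof.
move=> fz0; rewrite /divdiff !big_ord_recr /= big1 ?add0r; last first.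
  by move=> j _; rewrite nodes_low fz0 ?mul0r.
rewrite nodes_penult nodes_last prod_nodes_penult prod_nodes_last.
rewrite !invfM !mulrA -opprB invrN mulrN addrC mulrBl.
by rewrite [f b / _ / _]mulrAC.
Qed.

Section increasing_nodes.
Variables (n : nat) (z : nat -> R) (a b : R).
Hypotheses (z_lt : {homo z : i j / (i < j)%N >-> i < j})
  (za : forall j, z j < a) (ab : a < b).

Lemma nodes_homo : {homo @nodes n z a b : i j / (i < j)%N >-> i < j}.
Proof.
move=> i j ij; rewrite /nodes.
have [j_lt_n|n_le_j] := ltnP j n.
  by rewrite (ltn_trans ij j_lt_n); exact: z_lt.
have [i_lt_n|n_le_i] := ltnP i n.
  by case: ifP => _; [exact: za | exact: lt_trans (za i) ab].
have -> : i == n :> nat by have := ltn_ord j; lia.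
by have -> : (j == n :> nat) = false by lia.
Qed.

Lemma nodes_inj : injective (@nodes n z a b).
Proof.
move=> i j eq_ij; apply: val_inj.
by case: (ltngtP i j) => // ij; have := nodes_homo _ _ ij; rewrite eq_ij ltxx.
Qed.

End increasing_nodes.

End nodes.
Arguments nodes {R n}.
Arguments nodes_inj {R n z a b}.

Section monotone.
Context {R : realType}.
Implicit Types (f : R -> R) (a b t : R).

Definition zero_node (j : nat) : R := - (j.+2%:R)^-1.

Lemma zero_node_homo : {homo zero_node : i j / (i < j)%N >-> i < j}.
Proof. by move=> i j ij; rewrite ltrN2 ltf_pV2 ?posrE ?ltr0n // ltr_nat. Qed.

Lemma zero_node_bounds j : -1 < zero_node j < 0.
Proof.
rewrite /zero_node oppr_lt0 ltrN2 invr_gt0 ltr0n andbT.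
by rewrite invf_lt1 ?ltr0n // ltr1n.
Qed.

Lemma node_prod_gt0 n t : 0 <= t -> 0 < node_prod n zero_node t.
Proof.
by move=> t0; apply: prodr_gt0 => j _; have := zero_node_bounds j; lra.
Qed.

Lemma node_prod_le n a b : 0 <= a <= b ->
  node_prod n zero_node a <= node_prod n zero_node b.
Proof.
move=> /andP[a0 ab]; apply: ler_prod => j _.
by have := zero_node_bounds j; lra.
Qed.

Section Mkplus.
Context {n : nat} {f : R -> R}.
Hypothesis fM : Mkplus n.+1 f.

Lemma Mkplus_ratio_le {a b} : 0 <= a -> a < b -> b < 1 ->
  f a / node_prod n zero_node a <= f b / node_prod n zero_node b.
Proof.
have [f_div f0] := fM; move=> a0 ab b1.
have za j : zero_node j < a by have := zero_node_bounds j; lra.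
have in_range i : -1 < @nodes R n zero_node a b i < 1.
  rewrite /nodes; case: ifP => _; first by have := zero_node_bounds i; lra.
  by case: ifP => _; lra.
have := f_div _ (nodes_inj zero_node_homo za ab) in_range.
rewrite divdiff_nodes => [|j _]; last by apply: f0; have := zero_node_bounds j; lra.
by rewrite pmulr_lge0 ?subr_ge0 // invr_gt0 subr_gt0.
Qed.

Lemma Mkplus_ge0_le a b : -1 < a -> a <= b -> b < 1 -> 0 <= f a <= f b.
Proof.
move=> a1 ab b1; have f0 := fM.2.
pose P := node_prod n zero_node.
have f_ge0 t : 0 < t -> t < 1 -> 0 <= f t.
  move=> t0 t1; have := Mkplus_ratio_le (lexx 0) t0 t1.
  rewrite f0 ?mul0r; last by lra.
  by rewrite pmulr_lge0 // invr_gt0 node_prod_gt0 // ltW.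
have [b0|b0] := lerP b 0; first by rewrite !f0 ?lexx //; lra.
have [a0|a0] := lerP a 0; first by rewrite f0 ?lexx ?f_ge0 //; lra.
rewrite f_ge0 //=; last by lra.
have Pa := node_prod_gt0 n a (ltW a0); have Pb := node_prod_gt0 n b (ltW b0).
have ratio_le : f a / P a <= f b / P b.
  move: ab; rewrite le_eqVlt => /predU1P[->|ab'] //.
  exact: Mkplus_ratio_le (ltW a0) ab' b1.
rewrite -(divfK (lt0r_neq0 Pa) (f a)) -(divfK (lt0r_neq0 Pb) (f b)).
apply: le_trans (ler_wpM2r (ltW Pa) ratio_le) _.
rewrite ler_wpM2l ?node_prod_le ?(ltW a0) //.
by rewrite divr_ge0 ?f_ge0 ?ltW.
Qed.

End Mkplus.

End monotone.

Section difference_bound.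
Context {R : realType}.

Lemma bDelta_le (k : nat) (f : R -> R) (h x : R) :
  (forall a b, -1 < a -> a <= b -> b < 1 -> 0 <= f a <= f b) ->
  0 < h -> x < 1 -> x != k%:R * h - 1 ->
  `|bDelta k h f x| <= 2 ^+ k * `|f x|.
Proof.
move=> f_mono h0 x1 xk.
rewrite /bDelta /Delta; case: ifP => [/andP[lo _]|_]; last first.
  by rewrite normr0 mulr_ge0 ?exprn_ge0 ?ler0n.
set t := k%:R * h in xk lo *.
have t0 : 0 <= t by rewrite mulr_ge0 ?ler0n ?(ltW h0).
have x_gt : -1 < x - t.
  rewrite lt_neqAle; apply/andP; split; last by lra.
  by apply: contra xk => /eqP e; apply/eqP; lra.
have pts (i : 'I_k.+1) : -1 < x - t / 2 - t / 2 + i%:R * h <= x.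
  have ih0 : 0 <= i%:R * h by rewrite mulr_ge0 ?ler0n ?(ltW h0).
  have iht : i%:R * h <= t by rewrite ler_pM2r // ler_nat -ltnS.
  by apply/andP; split; lra.
have x_gt1 : -1 < x by lra.
have /andP[fx0 _] := f_mono x x x_gt1 (lexx x) x1.
have two_pow : (2 : R) ^+ k = \sum_(i < k.+1) 'C(k, i)%:R.
  by rewrite (_ : 2 = 1 + 1) ?exprD1n; [apply: eq_bigr => i _; rewrite expr1n | lra].
rewrite (ger0_norm fx0) two_pow mulr_suml.
apply: le_trans (ler_norm_sum _ _ _) _; apply: ler_sum => i _.
have /andP[pi1 pix] := pts i.
have /andP[fpi0 fpix] := f_mono _ _ pi1 pix x1.
rewrite !normrM normrX normrN1 expr1n mulr1 normr_nat (ger0_norm fpi0).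
by rewrite ler_wpM2l.
Qed.

End difference_bound.

Lemma measurable_wab (R : realType) (alpha beta : R) (D : set R) :
  measurable_fun D (wab alpha beta).
Proof.
apply: measurable_funM.
- apply: (measurableT_comp (measurable_powR alpha)).
  by apply: measurable_funD => //; exact: measurable_cst.
- apply: (measurableT_comp (measurable_powR beta)).
  by apply: measurable_funB => //; exact: measurable_cst.
Qed.

Theorem lemma4p1 (R : realType) (k : nat) (q alpha beta : R) (hq : 1 <= q) :
  exists c : R, 0 < c /\
    forall (f : R -> R), Mkplus k f -> Wq q alpha beta f ->
    forall delta : R, 0 < delta ->
      (bOmega k (wab alpha beta) q f delta <=
       c%:E * LqS q `[(1 - 2 * k%:R ^+ 2 * delta ^+ 2)%R, 1%R]
                   (fun x => (wab alpha beta x * f x)%R))%E.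
Proof.
exists (2 ^+ k); split; first by rewrite exprn_gt0.
move=> f fM [mf _] delta _; apply: ge_ereal_sup => _ [h /andP[h0 _] <-].
(* At x = 1 and at x = kh - 1 an end point of the difference is +-1, where
   f is unconstrained. *)
apply: (@LqS_le_ae _ _ _ _ [set 1; k%:R * h - 1]) => //.
- by lra.
- by apply: measurableU; exact: measurable_set1.
- by apply/countable_lebesgue_measure0/finite_set_countable/finite_set2.
- apply: measurable_funM; first exact: measurable_wab.
  by apply: measurable_funS mf => // x [].
move=> x [/= /[!in_itv] /= /andP[x_lo x_le1] _] /not_orP[/eqP x_neq1 /eqP x_neq].
have x_lt1 : x < 1 by rewrite lt_neqAle x_neq1.
case: k fM x_lo x_neq => [|n] fM x_lo x_neq.
  by move: x_lo; rewrite mulr0n expr0n mulr0 mul0r subr0; lra.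
rewrite !normrM mulrCA ler_wpM2l //.
by apply: bDelta_le => //; exact: Mkplus_ge0_le fM.
Qed.
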